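(* Let $G$ be a finite group, $K$ a field of characteristic $0$ which is a splitting field for $G$ and all of its subgroups, and $N$ a normal subgroup of $G$ containing the commutator subgroup $G'$. Let $\chi$ be an irreducible character of $G$, $\eta$ an irreducible constituent of $\mathrm{res}^G_N\chi$, and $G_\eta=\{g\in G:{}^g\eta=\eta\}$. Write $\mathrm{ind}_N^{G_\eta}\eta=\sum_{i=1}^s m_i\psi_i$ with positive integers $m_i$ and pairwise distinct irreducible characters $\psi_i$ of $G_\eta$, numbered so that $\mathrm{ind}_{G_\eta}^G\psi_1=\chi$, and put $\psi:=\psi_1$, $m:=m_1$. Then: (i) each $\psi_i$ is of the form $\psi\otimes\omega_i$ for some $\omega_i\in\mathrm{Irr}(G_\eta/N)$; (ii) each $\psi\otimes\omega$ with $\omega\in\mathrm{Irr}(G_\eta/N)$ equals some $\psi_i$; (iii) $m_i=m$ for all $1\le i\le s$, and $[G_\eta:N]=sm^2$.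
   Context: $G$ acts on characters of $N$ by ${}^g\eta(x)=\eta(g^{-1}xg)$. $\mathrm{res}$ and $\mathrm{ind}$ denote restriction and induction of characters. Characters of $G_\eta/N$ are viewed as characters of $G_\eta$ by inflation. (By Clifford theory, the irreducible characters of $G$ whose restriction to $N$ contains $\eta$ are exactly the $\mathrm{ind}_{G_\eta}^G\psi_i$, which are irreducible, so exactly one index satisfies $\mathrm{ind}_{G_\eta}^G\psi_i=\chi$.) *)

From mathcomp Require Import all_boot all_order all_algebra all_fingroup all_solvable all_field all_character.
Set Implicit Arguments.
Unset Strict Implicit.
Unset Printing Implicit Defensive.

From mathcomp Require Import all_boot all_order all_algebra all_fingroup all_solvable all_field all_character.

Set Implicit Arguments.
Unset Strict Implicit.
Unset Printing Implicit Defensive.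

Import GRing.Theory Num.Theory.
Local Open Scope group_scope.
Local Open Scope ring_scope.

(* As eta is invariant in T := G_eta, Clifford theory gives Res_N psi = m eta
   for every constituent psi of Ind_N^T eta. Since T/N is abelian, Ind_N^T 1
   is the sum of the linear characters omega of T/N, so
     m Ind_N^T eta = Ind_N^T (Res_N psi) = psi Ind_N^T 1 = sum_omega psi omega.
   Each psi omega is irreducible with the same restriction to N as psi, hence
   occurs in Ind_N^T eta with multiplicity m by Frobenius reciprocity; this
   gives (i), (ii) and the first half of (iii). Finally the norm of
   Ind_N^T eta is [T : N], again by invariance of eta, and equals s m^2. *)

Lemma cfnorm_constt_const (gT : finGroupType) (G : {group gT})
    (phi : 'CF(G)) (m : algC) :
  m \in Num.nat -> {in irr_constt phi, forall i, '[phi, 'chi_i] = m} ->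
  '[phi] = #|irr_constt phi|%:R * m ^+ 2.
Proof.
move=> Nm phi_m; rewrite cfdot_sum_irr (bigID (mem (irr_constt phi))) /=.
rewrite [X in _ + X]big1 ?addr0; last first.
  by move=> i; rewrite irr_consttE negbK => /eqP ->; rewrite mul0r.
rewrite (eq_bigr (fun=> m ^+ 2)) ?sumr_const ?mulr_natl // => i /phi_m ->.
by rewrite conj_natr // expr2.
Qed.

Section InvariantIrr.

Variables (gT : finGroupType) (T N : {group gT}) (e : Iirr N).
Hypotheses (nsNT : N <| T) (Te : T \subset 'I['chi_e]).

Let eta := 'chi[N]_e.

Lemma cfnorm_Ind_invariant_irr : '['Ind[T] eta] = #|T : N|%:R.
Proof.
rewrite -Frobenius_reciprocity cfRes_Ind_invariant //.
by rewrite cfdotZr cfnorm_irr mulr1 conjC_nat.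
Qed.

Lemma cfRes_constt_Ind_invariant p :
  p \in irr_constt ('Ind[T] eta) -> 'Res[N] 'chi_p = '['Ind[T] eta, 'chi_p] *: eta.
Proof.
rewrite constt_Ind_Res => pRe.
rewrite (Clifford_Res_sum_cfclass nsNT pRe) cfclass_invariant // big_seq1.
by rewrite cfdot_Res_l cfdotC conj_natr ?Cnat_cfdot_char ?cfInd_char ?irr_char.
Qed.

End InvariantIrr.

Section AbelianQuotient.

Variables (gT : finGroupType) (T N : {group gT}).
Hypotheses (nsNT : N <| T) (abTN : abelian (T / N)).

Lemma cfMod_irr_lin_char (w : Iirr (T / N)) : ('chi_w %% N)%CF \is a linear_char.
Proof. exact/cfMod_lin_char/char_abelianP. Qed.

Lemma cfInd1_sum_cfMod_irr : 'Ind[T, N] 1 = \sum_(w : Iirr (T / N)) ('chi_w %% N)%CF.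
Proof.
have [sNT nNT] := andP nsNT.
have ->: \sum_(w : Iirr (T / N)) ('chi_w %% N)%CF = (cfReg (T / N) %% N)%CF.
  rewrite cfReg_sum raddf_sum; apply: eq_bigr => w _.
  by rewrite lin_char1 ?scale1r //; apply/char_abelianP.
rewrite cfInd_cfun1 //; apply/cfun_inP => x Tx.
have Nx : x \in 'N(N) by apply: (subsetP nNT).
rewrite cfModE // cfRegE cfunE cfuniE // card_quotient //.
have [xN | xN'] := boolP (x \in N); first by rewrite coset_id // eqxx mulr1.
by case: eqP => [/(coset_idr Nx) | _]; rewrite ?(negPf xN') ?mulr0.
Qed.

Lemma cfRes_mul_cfMod_irr (phi : 'CF(T)) (w : Iirr (T / N)) :
  'Res[N] (phi * ('chi_w %% N)%CF) = 'Res[N] phi.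
Proof.
rewrite rmorphM /= [X in _ * X]cfRes_sub_ker ?cfker_mod //.
by rewrite lin_char1 ?cfMod_irr_lin_char // scale1r mulr1.
Qed.

Variables (e : Iirr N) (p : Iirr T).
Hypotheses (Te : T \subset 'I['chi_e]) (pIe : p \in irr_constt ('Ind[T] 'chi_e)).

Let etaT := 'Ind[T] 'chi[N]_e.
Let m := '[etaT, 'chi_p].
Let psi_ w := 'chi_p * ('chi[T / N]_w %% N)%CF.

Lemma mul_cfMod_irr w : psi_ w \in irr T.
Proof. by rewrite /psi_ mulrC mul_lin_irr ?cfMod_irr_lin_char ?mem_irr. Qed.

Lemma cfdot_Ind_invariant_mul_cfMod w : '[etaT, psi_ w] = m.
Proof.
by rewrite -Frobenius_reciprocity cfRes_mul_cfMod_irr Frobenius_reciprocity.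
Qed.

Lemma scale_Ind_invariant_sum_mul_cfMod : m *: etaT = \sum_w psi_ w.
Proof.
rewrite -mulr_sumr -cfInd1_sum_cfMod_irr mulrC -cfIndM ?normal_sub // mul1r.
by rewrite (cfRes_constt_Ind_invariant nsNT Te pIe) linearZ.
Qed.

Lemma constt_Ind_invariant_mul_cfMod i :
  i \in irr_constt etaT -> exists w, 'chi_i = psi_ w.
Proof.
move=> iIe; have m_neq0 : m != 0 by rewrite -irr_consttE.
have : '[m *: etaT, 'chi_i] != 0 by rewrite cfdotZl mulf_neq0 // -irr_consttE.
rewrite scale_Ind_invariant_sum_mul_cfMod cfdot_suml.
case: (pickP (fun w => '[psi_ w, 'chi_i] != 0)) => [w nz_w _ | /= psi'i].
  have [k Dk] := irrP (mul_cfMod_irr w); exists w.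
  by move: nz_w; rewrite Dk cfdot_irr pnatr_eq0 eqb0 negbK => /eqP <-.
by rewrite big1 ?eqxx // => w _; apply/eqP/negbFE/psi'i.
Qed.

Lemma mul_cfMod_constt_Ind_invariant w :
  exists2 i, i \in irr_constt etaT & 'chi_i = psi_ w.
Proof.
have [i Di] := irrP (mul_cfMod_irr w); exists i => //.
by rewrite irr_consttE -Di cfdot_Ind_invariant_mul_cfMod -irr_consttE.
Qed.

Lemma cfdot_constt_Ind_invariant : {in irr_constt etaT, forall i, '[etaT, 'chi_i] = m}.
Proof.
by move=> i /constt_Ind_invariant_mul_cfMod [w ->]; apply: cfdot_Ind_invariant_mul_cfMod.
Qed.

Lemma indexg_constt_Ind_invariant : #|T : N|%:R = #|irr_constt etaT|%:R * m ^+ 2.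
Proof.
rewrite -(cfnorm_Ind_invariant_irr nsNT Te).
apply: cfnorm_constt_const cfdot_constt_Ind_invariant.
by rewrite Cnat_cfdot_char ?cfInd_char ?irr_char.
Qed.

End AbelianQuotient.

Theorem proposition2p3 (gT : finGroupType) (G N : {group gT})
    (c : Iirr G) (e : Iirr N) (p : Iirr 'I_G['chi[N]_e]) :
  N <| G -> (G^`(1))%g \subset N ->
  e \in irr_constt ('Res[N] 'chi[G]_c) ->
  p \in irr_constt ('Ind['I_G['chi[N]_e]] 'chi[N]_e) ->
  'Ind[G] 'chi[ 'I_G['chi[N]_e]]_p = 'chi[G]_c ->
  let T := 'I_G['chi[N]_e] in
  let etaT := 'Ind[T] 'chi[N]_e in
  let m := '[etaT, 'chi[T]_p] in
  [/\ (* (i) *)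
      forall i : Iirr T, i \in irr_constt etaT ->
        exists w : Iirr (T / N), 'chi[T]_i = 'chi[T]_p * ('chi[T / N]_w %% N)%CF,
      (* (ii) *)
      forall w : Iirr (T / N), exists2 i : Iirr T, i \in irr_constt etaT &
        'chi[T]_i = 'chi[T]_p * ('chi[T / N]_w %% N)%CF
    & (* (iii) *)
      (forall i : Iirr T, i \in irr_constt etaT -> '[etaT, 'chi[T]_i] = m)
      /\ (#|T : N|)%:R = (#|irr_constt etaT|)%:R * m ^+ 2].
Proof.
move=> nsNG sG'N _ pIe _ T etaT m.
have nsNT : N <| T by apply: normal_Inertia; apply: normal_sub.
have abTN : abelian (T / N).
  by apply: sub_der1_abelian; apply: subset_trans sG'N; apply: dergS; apply: Inertia_sub.
have Te : T \subset 'I['chi_e] by apply: subsetIr.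
split.
- exact: constt_Ind_invariant_mul_cfMod.
- exact: mul_cfMod_constt_Ind_invariant.
- split; [exact: cfdot_constt_Ind_invariant | exact: indexg_constt_Ind_invariant].
Qed.
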